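(* Let $(c_{a,b})_{(a,b)\in I}$ be arbitrary real numbers indexed by $I=\{(a,b): b=1,2,\dots;\ a=b+1,\dots,2b\}$, and let $\beta=\sum_{n\ge1}\alpha_n s^n$ be the unique formal power series in $s$ (with zero constant term) satisfying \[ \beta=s\Big[1+\sum_{(a,b)\in I}c_{a,b}\,\beta^a s^{b-a}\Big]. \] Then, with $\mathbb N=\{0,1,2,\dots\}$ and $S_n:=\{(n_{a,b})\in\mathbb N^I: n=1+\sum_{I} b\,n_{a,b}\}$, \[ \alpha_n=\sum_{(n_{a,b})\in S_n}\frac{\big[\sum_I a\,n_{a,b}\big]!}{\big[\prod_I n_{a,b}!\big]\,\big[1+\sum_I (a-1)n_{a,b}\big]!}\prod_I c_{a,b}^{\,n_{a,b}}. \]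
   Context: Only finitely many $n_{a,b}$ are nonzero for elements of $S_n$, so all sums and products are finite. Note $b-a<0$ on $I$ but since $a\le 2b$ the right side of the defining equation, after substituting a series $\beta=s+O(s^2)$, is a well-defined formal power series in $s$. *)

From HB Require Import structures.
From mathcomp Require Import all_boot all_order all_algebra.
Set Implicit Arguments. Unset Strict Implicit. Unset Printing Implicit Defensive.
Import Order.TTheory GRing.Theory Num.Theory.
Local Open Scope ring_scope.

(* Formal power series over R are represented by coefficient sequences nat -> R. *)

Definition mulps (R : nzRingType) (f g : nat -> R) : nat -> R :=
  fun k => \sum_(i < k.+1) f i * g (k - i)%N.

Definition oneps (R : nzRingType) : nat -> R := fun k => (k == 0%N)%:R.

Definition powps (R : nzRingType) (f : nat -> R) (a : nat) : nat -> R :=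
  iter a (mulps f) (oneps R).

Definition inI (a b : nat) : bool := (0 < b)%N && (b < a <= 2 * b)%N.

(* Coefficient of s^n in  s * [1 + sum_{(a,b) in I} c_{a,b} beta^a s^(b-a)],
   where beta has coefficients alpha (alpha 0 = 0).  The coefficient of s^n
   in s * beta^a * s^(b-a) is the coefficient of s^(n-1+a-b) in beta^a; since
   beta^a has order >= a (alpha 0 = 0), only the (finitely many) terms with
   b <= n-1 can contribute, and those have n-1+a-b >= 0. *)
Definition rhs_coef (R : nzRingType) (c : nat -> nat -> R) (alpha : nat -> R)
  (n : nat) : R :=
  (n == 1%N)%:R +
  \sum_(1 <= b < n) \sum_(b.+1 <= a < (2 * b).+1)
     c a b * powps alpha a (n.-1 + a - b)%N.

Definition solves_eq (R : nzRingType) (c : nat -> nat -> R) (alpha : nat -> R) :=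
  alpha 0%N = 0 /\ forall n, alpha n = rhs_coef c alpha n.

(* S_n: families (n_{a,b})_{(a,b) in I} of naturals with n = 1 + sum b n_{a,b}.
   Any such family has n_{a,b} = 0 unless b <= n-1 (so a <= 2n), and all
   n_{a,b} <= n; hence it is encoded faithfully as a finite function on
   'I_(2n+1) x 'I_(n+1) with values in 'I_(n+1), vanishing off I. *)
Definition Idx (n : nat) : finType := ('I_(2 * n).+1 * 'I_n.+1)%type.

Definition Sn (n : nat) : {set {ffun Idx n -> 'I_n.+1}} :=
  [set f : {ffun Idx n -> 'I_n.+1} |
     [forall p : Idx n, ~~ inI p.1 p.2 ==> (val (f p) == 0%N)] &&
     ((1 + \sum_(p : Idx n | inI p.1 p.2) p.2 * f p)%N == n)].

Definition alpha_formula (R : fieldType) (c : nat -> nat -> R) (n : nat) : R :=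
  \sum_(f in Sn n)
    (((\sum_(p : Idx n | inI p.1 p.2) p.1 * f p)%N`!)%:R /
      (((\prod_(p : Idx n | inI p.1 p.2) (f p)`!)%N)%:R *
       ((1 + \sum_(p : Idx n | inI p.1 p.2) (p.1 - 1) * f p)%N`!)%:R) *
     \prod_(p : Idx n | inI p.1 p.2) c p.1 p.2 ^+ f p).

From HB Require Import structures.
From mathcomp Require Import all_boot all_order all_algebra zify.
Set Implicit Arguments. Unset Strict Implicit. Unset Printing Implicit Defensive.
Import Order.TTheory GRing.Theory Num.Theory.
Local Open Scope ring_scope.

(* Put u := beta / s, i.e. the coefficient sequence [shiftps alpha], so that
   u = 1 + sum_I c_{a,b} s^b u^a.  Multiplying by u^r gives
     u^(r+1) = u^r + sum_I c_{a,b} s^b u^(a+r),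
   which determines [s^n] u^r by induction on 2n + r from u^0 = 1.  The closed form
     P_r(n) = sum_{sum_I b n_{a,b} = n}
                r (A + r - 1)! / (prod_I n_{a,b}! (L + r)!) prod_I c_{a,b}^n_{a,b},
   with A = sum_I a n_{a,b} and L = sum_I (a - 1) n_{a,b}, satisfies the same recurrence:
   the terms of P_{a+r}(n - b) correspond to the families of P_{r+1}(n) with one unit
   removed from n_{a,b}, and summing over (a,b) yields P_{r+1}(n) - P_r(n).
   Hence alpha_n = [s^(n-1)] u = P_1(n - 1). *)

Lemma exchange_big_triangular (V : nmodType) n (F : nat -> nat -> V) :
  \sum_(0 <= i < n.+1) \sum_(1 <= b < i.+1) F b i =
  \sum_(1 <= b < n.+1) \sum_(b <= i < n.+1) F b i.
Proof.
transitivity (\sum_(0 <= i < n.+1) \sum_(1 <= b < n.+1) if (b <= i)%N then F b i else 0).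
  apply: eq_big_nat => i /andP[_ lt_in].
  by rewrite (big_nat_widen _ _ _ _ _ lt_in) -big_mkcondr.
rewrite exchange_big_nat; apply: eq_big_nat => b /andP[b_gt0 lt_bn].
by rewrite -big_mkcondr (big_nat_widenl _ _ _ _ _ (leq0n b)).
Qed.

Section FormalPowerSeries.
Variable R : nzRingType.
Implicit Types f g h : nat -> R.

Definition trunc_poly f k : {poly R} := \poly_(i < k.+1) f i.

Definition shiftps f : nat -> R := fun i => f i.+1.

Lemma coefM_eq (p p' q q' : {poly R}) k :
    (forall i, (i <= k)%N -> p`_i = p'`_i) ->
    (forall i, (i <= k)%N -> q`_i = q'`_i) ->
  (p * q)`_k = (p' * q')`_k.
Proof.
move=> eq_p eq_q; rewrite !coefM; apply: eq_bigr => i _.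
by rewrite eq_p ?eq_q ?leq_subr // -ltnS.
Qed.

Lemma coef_trunc_poly f k i : (i <= k)%N -> (trunc_poly f k)`_i = f i.
Proof. by move=> le_ik; rewrite coef_poly ltnS le_ik. Qed.

Lemma mulps_trunc f g k : mulps f g k = (trunc_poly f k * trunc_poly g k)`_k.
Proof.
rewrite coefM; apply: eq_bigr => i _.
by rewrite !coef_trunc_poly ?leq_subr // -ltnS.
Qed.

Lemma coef_trunc_mulps f g k i :
  (i <= k)%N -> (trunc_poly (mulps f g) k)`_i = (trunc_poly f k * trunc_poly g k)`_i.
Proof.
move=> le_ik; rewrite coef_trunc_poly // mulps_trunc.
by apply: coefM_eq => j le_ji; rewrite !coef_trunc_poly //; apply: leq_trans le_ik.
Qed.

Lemma mulpsA f g h k : mulps f (mulps g h) k = mulps (mulps f g) h k.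
Proof.
rewrite !mulps_trunc.
transitivity ((trunc_poly f k * trunc_poly g k * trunc_poly h k)`_k).
  by rewrite -mulrA; apply: coefM_eq => // i; apply: coef_trunc_mulps.
by apply: coefM_eq => // i /coef_trunc_mulps.
Qed.

Lemma mul1ps g k : mulps (oneps R) g k = g k.
Proof.
rewrite /mulps big_ord_recl /oneps /= mul1r subn0 big1 ?addr0 // => i _.
by rewrite mul0r.
Qed.

Lemma mulps1 f k : mulps f (oneps R) k = f k.
Proof.
rewrite /mulps big_ord_recr /oneps /= subnn mulr1 big1 ?add0r // => i _.
by rewrite subn_eq0 leqNgt ltn_ord mulr0.
Qed.

Lemma eq_mulpsr f g g' k :
  (forall j, (j <= k)%N -> g j = g' j) -> mulps f g k = mulps f g' k.
Proof. by move=> eq_g; apply: eq_bigr => i _; rewrite eq_g ?leq_subr. Qed.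

Lemma powpsD f a r k : mulps (powps f a) (powps f r) k = powps f (a + r) k.
Proof.
elim: a k => [|a IHa] k; first by rewrite mul1ps.
by rewrite addSn /= -mulpsA; apply: eq_mulpsr => j _; apply: IHa.
Qed.

Lemma mulps_shiftl f g k : f 0%N = 0 -> mulps f g k.+1 = mulps (shiftps f) g k.
Proof.
move=> f0; rewrite /mulps big_ord_recl f0 mul0r add0r.
by apply: eq_bigr => i _; rewrite subSS.
Qed.

Lemma mulps_shiftr f g r k : (forall j, (j < r)%N -> g j = 0) ->
  mulps f g (k + r) = mulps f (fun j => g (j + r)%N) k.
Proof.
move=> g_small; rewrite /mulps -addSn big_split_ord /= [X in _ + X]big1 ?addr0.
  by apply: eq_bigr => i _; congr (_ * g _); have := ltn_ord i; lia.
by move=> i _; rewrite g_small ?mulr0 //; have := ltn_ord i; lia.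
Qed.

Lemma powps_lt_order f r j : f 0%N = 0 -> (j < r)%N -> powps f r j = 0.
Proof.
move=> f0; elim: r j => // r IHr j lt_jr /=; rewrite /mulps big1 // => i _.
have [->|i_gt0] := posnP i; first by rewrite f0 mul0r.
by rewrite IHr ?mulr0 //; have := ltn_ord i; lia.
Qed.

Lemma powps_shift f r k : f 0%N = 0 -> powps f r (k + r) = powps (shiftps f) r k.
Proof.
move=> f0; elim: r k => [|r IHr] k; first by rewrite addn0.
rewrite addnS /= mulps_shiftl // mulps_shiftr => [|j]; last exact: powps_lt_order.
by apply: eq_mulpsr => j _; rewrite IHr.
Qed.

Lemma mulps_offset f g b n : (b <= n)%N ->
  \sum_(b <= i < n.+1) f (i - b)%N * g (n - i)%N = mulps f g (n - b)%N.
Proof.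
move=> le_bn; rewrite -{1}(add0n b) big_addn big_mkord.
have -> : (n.+1 - b = (n - b).+1)%N by lia.
by apply: eq_bigr => i _; rewrite addnK; congr (_ * g _); lia.
Qed.

End FormalPowerSeries.

Section SolutionPowers.
Variables (R : nzRingType) (c : nat -> nat -> R) (alpha : nat -> R).
Hypothesis alpha_sol : solves_eq c alpha.
Local Notation u := (shiftps alpha).

Lemma shiftps_solution k : u k = (k == 0)%:R +
  \sum_(1 <= b < k.+1) \sum_(b.+1 <= a < (2 * b).+1) c a b * powps u a (k - b)%N.
Proof.
have [alpha0 alpha_eq] := alpha_sol; rewrite /shiftps alpha_eq /rhs_coef eqSS.
congr (_ + _); apply: eq_big_nat => b /andP[_ lt_bk]; apply: eq_big_nat => a _.
by rewrite -powps_shift //; congr (c a b * powps alpha a _); lia.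
Qed.

Lemma powps_solutionS r n : powps u r.+1 n = powps u r n +
  \sum_(1 <= b < n.+1) \sum_(b.+1 <= a < (2 * b).+1) c a b * powps u (a + r)%N (n - b)%N.
Proof.
rewrite /= /mulps -(big_mkord xpredT (fun i => u i * powps u r (n - i))).
under eq_big_nat => i _ do rewrite shiftps_solution mulrDl mulr_suml.
rewrite big_split /= big_ltn // mul1r subn0 big_nat_cond big1 ?add0r => [|i]; last first.
  by case/andP=> /andP[/gtn_eqF-> _] _; rewrite mul0r.
rewrite addr0 exchange_big_triangular; congr (_ + _).
apply: eq_big_nat => b /andP[_ lt_bn]; under [LHS]eq_bigr do rewrite mulr_suml.
rewrite exchange_big_nat; apply: eq_big_nat => a _.
by rewrite -powpsD -mulps_offset // mulr_sumr; apply: eq_bigr => i _; rewrite mulrA.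
Qed.

End SolutionPowers.

Lemma inI_bounds a b : inI a b -> (0 < b)%N /\ (1 < a)%N.
Proof. by case/and3P=> b_gt0 lt_ba _; split=> //; lia. Qed.

Lemma divr_natr_scale (R : numFieldType) (x y z : nat) : (0 < z)%N ->
  (z * x)%:R / (z * y)%:R = x%:R / y%:R :> R.
Proof.
by move=> z_gt0; rewrite !natrM invfM mulrACA divff ?mul1r // pnatr_eq0 -lt0n.
Qed.

Section Families.
Variables (R : numFieldType) (c : nat -> nat -> R) (N : nat).
Local Notation family := {ffun Idx N -> 'I_N.+1}.
Implicit Types (f g : family) (k p : Idx N) (w : nat -> nat -> nat).

Definition isum w f : nat := \sum_(p : Idx N | inI p.1 p.2) w p.1 p.2 * f p.

Local Notation weight := (isum (fun _ b => b)).
Local Notation degree := (isum (fun a _ => a)).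
Local Notation excess := (isum (fun a _ => a - 1)%N).
Local Notation total := (isum (fun _ _ => 1%N)).

Definition factprod f : nat := \prod_(p : Idx N | inI p.1 p.2) (f p)`!.

Definition cmono f : R := \prod_(p : Idx N | inI p.1 p.2) c p.1 p.2 ^+ f p.

Definition supported f : bool :=
  [forall p : Idx N, ~~ inI p.1 p.2 ==> (val (f p) == 0%N)].

Definition families n : {set family} := [set f | supported f && (weight f == n)].

(* For r = 0 the factorial formula would vanish, whereas u^0 = 1 comes from the zero family. *)
Definition lagrange_coef r f : R :=
  if r is r'.+1 then (r * (degree f + r')`!)%:R / (factprod f * (excess f + r)`!)%:R
  else (total f == 0%N)%:R.

(* [powcoef r n] is the closed form of [s^n] u^r; the theorem is the case r = 1. *)
Definition powcoef r n : R := \sum_(f in families n) lagrange_coef r f * cmono f.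

Definition decf k f : family := [ffun p => if p == k then inord (f p).-1 else f p].

(* [inord] wraps around at N: see [incf_wrap]. *)
Definition incf k f : family := [ffun p => if p == k then inord (f p).+1 else f p].

Lemma decfE k f p : decf k f p = (if p == k then (f p).-1 else f p) :> nat.
Proof.
rewrite ffunE; case: eqP => // _; rewrite inordK //.
exact: leq_ltn_trans (leq_pred _) (ltn_ord _).
Qed.

Lemma incfE k f p : (f k < N)%N ->
  incf k f p = (if p == k then (f p).+1 else f p) :> nat.
Proof. by move=> lt_fk_N; rewrite ffunE; case: eqP => // ->; rewrite inordK. Qed.

Lemma incf_wrap k f : f k = N :> nat -> incf k f k = 0%N :> nat.
Proof. by move=> fk_N; rewrite ffunE eqxx /inord /insubd insubF // fk_N ltnn. Qed.

Lemma decfK k f : (0 < f k)%N -> incf k (decf k f) = f.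
Proof.
move=> fk_gt0; have lt_dk_N : (decf k f k < N)%N.
  by rewrite decfE eqxx; have := ltn_ord (f k); lia.
apply/ffunP => p; apply: val_inj; rewrite /= incfE // decfE.
by case: eqP => [->|]; first rewrite prednK.
Qed.

Lemma incfK k f : (f k < N)%N -> decf k (incf k f) = f.
Proof.
move=> lt_fk_N; apply/ffunP => p; apply: val_inj.
by rewrite /= decfE incfE //; case: eqP => [->|].
Qed.

Lemma supported_eq_off k f g : inI k.1 k.2 ->
  (forall p, p != k -> g p = f p) -> supported g = supported f.
Proof.
move=> Ik eq_gf; apply: eq_forallb => p.
by have [->|/eq_gf->] := eqVneq p k; rewrite ?Ik.
Qed.

Lemma big_decf (X : Type) (idx : X) (op : Monoid.com_law idx)
    (F : Idx N -> nat -> X) k f : inI k.1 k.2 ->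
  \big[op/idx]_(p : Idx N | inI p.1 p.2) F p (decf k f p) =
  op (F k (f k).-1) (\big[op/idx]_(p : Idx N | inI p.1 p.2 && (p != k)) F p (f p)).
Proof.
move=> Ik; rewrite (bigD1 k) //= decfE eqxx; congr (op _ _).
by apply: eq_bigr => p /andP[_ /negbTE p_k]; rewrite decfE p_k.
Qed.

Lemma isum_decf w k f : inI k.1 k.2 -> (0 < f k)%N ->
  isum w f = (w k.1 k.2 + isum w (decf k f))%N.
Proof.
move=> Ik fk_gt0; rewrite /isum (bigD1 k) //=.
rewrite (big_decf addn (fun p x => w p.1 p.2 * x)%N) //.
by rewrite addnA -mulnS prednK.
Qed.

Lemma factprod_decf k f : inI k.1 k.2 -> (0 < f k)%N ->
  factprod f = (f k * factprod (decf k f))%N.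
Proof.
move=> Ik fk_gt0; rewrite /factprod (bigD1 k) //= (big_decf muln (fun _ x => x`!)) //.
by rewrite mulnA -{2}(prednK fk_gt0) -factS prednK.
Qed.

Lemma cmono_decf k f : inI k.1 k.2 -> (0 < f k)%N ->
  cmono f = c k.1 k.2 * cmono (decf k f).
Proof.
move=> Ik fk_gt0; rewrite /cmono (bigD1 k) //=.
rewrite (big_decf *%R (fun p x => c p.1 p.2 ^+ x)) //.
by rewrite mulrA -exprS prednK.
Qed.

Lemma isum_ge w k f : inI k.1 k.2 -> (w k.1 k.2 * f k <= isum w f)%N.
Proof. by move=> Ik; rewrite /isum (bigD1 k) //= leq_addr. Qed.

Lemma isumD w1 w2 f :
  (isum w1 f + isum w2 f)%N = isum (fun a b => w1 a b + w2 a b)%N f.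
Proof. by rewrite /isum -big_split; apply: eq_bigr => p _; rewrite mulnDl. Qed.

Lemma excess_total f : (excess f + total f)%N = degree f.
Proof.
rewrite isumD /isum; apply: eq_bigr => p /inI_bounds[_ a_gt1].
by rewrite subnK // ltnW.
Qed.

Lemma total_eq0 f p : total f = 0%N -> inI p.1 p.2 -> f p = 0%N :> nat.
Proof.
by move=> total0 Ip; apply/eqP; rewrite -leqn0 -total0 -[X in (X <= _)%N]mul1n isum_ge.
Qed.

Lemma isum_total0 w f : total f = 0%N -> isum w f = 0%N.
Proof. by move=> total0; rewrite /isum big1 // => p /(total_eq0 total0) ->; rewrite muln0. Qed.

Lemma factprod_total0 f : total f = 0%N -> factprod f = 1%N.
Proof. by move=> total0; rewrite /factprod big1 // => p /(total_eq0 total0) ->. Qed.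

Lemma lagrange_coef_decf r k f : inI k.1 k.2 -> (0 < f k)%N ->
  lagrange_coef (r + k.1)%N (decf k f) =
  (f k * ((r + k.1) * (degree f + r).-1`!))%N%:R /
  (factprod f * (excess f + r.+1)`!)%N%:R.
Proof.
move=> Ik fk_gt0; have [_ a_gt1] := inI_bounds Ik.
have := isum_decf (fun a _ => a) Ik fk_gt0.
have := isum_decf (fun a _ => a - 1)%N Ik fk_gt0.
rewrite (factprod_decf Ik fk_gt0) /=.
have -> : (r + k.1 = (r + k.1).-1.+1)%N by lia.
rewrite /lagrange_coef -mulnA divr_natr_scale // => -> ->.
have -> : ((k.1 + degree (decf k f) + r).-1 = degree (decf k f) + (r + k.1).-1)%N by lia.
by have -> : (k.1 - 1 + excess (decf k f) + r.+1 =
               excess (decf k f) + (r + k.1).-1.+1)%N by lia.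
Qed.

(* Rests on [sum_k f_k (r + a_k) = r total + degree] and
   [r (excess + r + 1) + r total + degree = (r + 1) (degree + r)]. *)
Lemma lagrange_coefS r f : lagrange_coef r.+1 f = lagrange_coef r f +
  \sum_(k : Idx N | inI k.1 k.2 && (0 < f k)%N) lagrange_coef (r + k.1)%N (decf k f).
Proof.
set Z := ((degree f + r).-1)`!; set D := (factprod f * (excess f + r.+1)`!)%N.
rewrite (eq_bigr (fun k => (f k * ((r + k.1) * Z))%N%:R / D%:R)) => [|k /andP[Ik fk_gt0]];
  last exact: lagrange_coef_decf.
rewrite -mulr_suml -natr_sum big_mkcondr /=.
have -> : (\sum_(k : Idx N | inI k.1 k.2)
    (if (0 < f k)%N then f k * ((r + k.1) * Z) else 0))%N = ((r * total f + degree f) * Z)%N.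
  rewrite /isum big_distrr mulnDl !big_distrl -big_split /=; apply: eq_bigr => k _.
  by clearbody Z; case: posnP => [->|_]; lia.
have := excess_total f; case: r => [|r] in Z D * => degreeE.
  rewrite /lagrange_coef; have [total0|total_neq0] := eqVneq (total f) 0%N.
    rewrite /D !(isum_total0 _ total0) (factprod_total0 total0).
    by rewrite !mul0n mul0r addr0 divff // oner_eq0.
  have degree_gt0 : (0 < degree f)%N by lia.
  by rewrite add0r /Z /D !addn0 mul0n add0n mul1n -{1}(prednK degree_gt0) factS prednK.
have -> : lagrange_coef r.+1 f =
    ((excess f + r.+1).+1 * (r.+1 * (degree f + r)`!))%:R / D%:R.
  rewrite /lagrange_coef /D [(excess f + r.+2)%N]addnS factS.
  by rewrite [(factprod f * (_ * _))%N]mulnCA divr_natr_scale.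
rewrite -mulrDl -natrD /Z /D !addnS factS /=; congr (_%:R / _%:R).
move: (_`!) => F; nia.
Qed.

Lemma sum_inI_le (V : nmodType) (F : nat -> nat -> V) n : (n <= N)%N ->
  \sum_(p : Idx N | inI p.1 p.2 && (p.2 <= n)%N) F p.1 p.2 =
  \sum_(1 <= b < n.+1) \sum_(b.+1 <= a < (2 * b).+1) F a b.
Proof.
move=> le_nN; rewrite -(pair_big_dep xpredT (fun (a : 'I_(2 * N).+1) (b : 'I_N.+1) =>
  inI a b && (b <= n)%N) (fun a b => F a b)) /= (exchange_big_dep xpredT) //=.
rewrite [RHS](big_nat_widenl 1 0) // [RHS](big_nat_widen _ _ N.+1) //.
rewrite big_mkord [RHS]big_mkcond /=.
apply: eq_bigr => b _; rewrite ltnS; case: ifP => [/andP[b_gt0 le_bn]|b_out]; last first.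
  by rewrite big_pred0 // => a; apply: contraFF b_out => /andP[/and3P[-> _ _] ->].
rewrite (big_nat_widenl b.+1 0) // (big_nat_widen _ _ (2 * N).+1); last by lia.
by rewrite big_mkord; apply: eq_bigl => a; rewrite /inI b_gt0 le_bn andbT ltnS.
Qed.

Definition family0 : family := [ffun => ord0].

Lemma isum_family0 w : isum w family0 = 0%N.
Proof. by rewrite /isum big1 // => p _; rewrite ffunE muln0. Qed.

Lemma supported_family0 : supported family0.
Proof. by apply/forallP => p; rewrite ffunE implybT. Qed.

Lemma total_eq0_family0 f : supported f -> total f = 0%N -> f = family0.
Proof.
move=> /forallP supp_f total0; apply/ffunP => p; apply: val_inj; rewrite ffunE /=.
have [Ip|nIp] := boolP (inI p.1 p.2); first exact: total_eq0.
by apply/eqP; move: (supp_f p); rewrite nIp.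
Qed.

Lemma powcoef0 n : powcoef 0 n = (n == 0%N)%:R.
Proof.
rewrite /powcoef (bigID (fun f => total f == 0%N)) /=.
rewrite [X in _ + X]big1 ?addr0 => [|f /andP[_ /negbTE total_neq0]]; last first.
  by rewrite /lagrange_coef total_neq0 mul0r.
have families_total0 f :
    (f \in families n) && (total f == 0%N) = (n == 0%N) && (f == family0).
  rewrite inE; apply/andP/andP => [[/andP[supp_f /eqP <-] /eqP total0] | [/eqP-> /eqP->]].
    by rewrite isum_total0 // (total_eq0_family0 supp_f total0).
  by rewrite supported_family0 !isum_family0.
rewrite (eq_bigl _ _ families_total0); case: eqP => _; last by rewrite big_pred0.
rewrite big_pred1_eq /lagrange_coef /cmono isum_family0 big1 ?mul1r // => p _.
by rewrite ffunE.
Qed.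

Lemma families_incf k g n : inI k.1 k.2 -> (g k < N)%N -> (k.2 <= n)%N ->
  (incf k g \in families n) = (g \in families (n - k.2)%N).
Proof.
move=> Ik lt_gk_N le_bn; have incf_k_gt0 : (0 < incf k g k)%N by rewrite incfE ?eqxx.
rewrite !inE (supported_eq_off Ik (g := incf k g) (f := g)) => [|p /negbTE p_k]; last first.
  by apply: val_inj; rewrite /= incfE // p_k.
rewrite (isum_decf _ Ik incf_k_gt0) incfK //; congr (_ && _); apply/eqP/eqP; lia.
Qed.

Lemma families_weight_ge k f n :
  inI k.1 k.2 -> f \in families n -> (k.2 * f k <= n)%N.
Proof. by move=> Ik; rewrite inE => /andP[_ /eqP <-]; apply: isum_ge. Qed.

Lemma sum_families_decf r k n : inI k.1 k.2 -> (n <= N)%N ->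
  \sum_(f in families n | (0 < f k)%N) lagrange_coef (r + k.1)%N (decf k f) * cmono f =
  if (k.2 <= n)%N then c k.1 k.2 * powcoef (k.1 + r)%N (n - k.2)%N else 0.
Proof.
move=> Ik le_nN; have [b_gt0 _] := inI_bounds Ik.
case: ifPn => [le_bn|]; last first.
  rewrite -ltnNge => lt_nb; rewrite big_pred0 // => f; apply/negbTE.
  apply/andP=> -[/(families_weight_ge Ik) le_n fk_gt0]; move: le_n; rewrite leqNgt.
  by rewrite (leq_trans lt_nb) // leq_pmulr.
rewrite (reindex_onto (incf k) (decf k)) => [|f /andP[_]]; last exact: decfK.
rewrite /powcoef mulr_sumr; apply: eq_big => g.
  have [lt_gk_N|] := ltnP (g k) N.
    by rewrite incfE ?eqxx // incfK // eqxx !andbT families_incf.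
  rewrite leq_eqVlt ltnNge -ltnS ltn_ord orbF => /eqP/esym gk_N.
  rewrite incf_wrap // ltnn andbF /=; apply/esym/negbTE/negP => /(families_weight_ge Ik).
  rewrite gk_N => /(leq_trans (leq_pmull N b_gt0)); apply/negP; rewrite -ltnNge.
  by apply: leq_trans le_nN; rewrite ltn_subrL b_gt0 (leq_trans b_gt0 le_bn).
case/andP=> /andP[_ incf_k_gt0] /eqP decf_incf.
by rewrite (cmono_decf Ik incf_k_gt0) decf_incf addnC mulrCA.
Qed.

Lemma powcoefS r n : (n <= N)%N -> powcoef r.+1 n = powcoef r n +
  \sum_(1 <= b < n.+1) \sum_(b.+1 <= a < (2 * b).+1) c a b * powcoef (a + r)%N (n - b)%N.
Proof.
move=> le_nN; rewrite -(sum_inI_le (fun a b => c a b * powcoef (a + r)%N (n - b)%N) le_nN).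
rewrite big_mkcondr /= [powcoef r.+1 n]/powcoef [powcoef r n]/powcoef.
under [LHS]eq_bigr => f _ do rewrite lagrange_coefS mulrDl mulr_suml.
rewrite big_split /=; congr (_ + _).
rewrite (exchange_big_dep (fun k : Idx N => inI k.1 k.2)) => [|f k _ /andP[]//] /=.
apply: eq_bigr => k Ik; rewrite -sum_families_decf //.
by apply: eq_bigl => f; rewrite Ik.
Qed.

End Families.

Lemma powps_solution_powcoef (R : numFieldType) (c : nat -> nat -> R)
    (alpha : nat -> R) N :
  solves_eq c alpha ->
  forall r n, (n <= N)%N -> powps (shiftps alpha) r n = powcoef c N r n.
Proof.
move=> alpha_sol r n; have [M] := ubnP (2 * n + r)%N.
elim: M r n => // M IH [|r] n lt_M le_nN; first by rewrite powcoef0.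
rewrite (powps_solutionS alpha_sol) powcoefS //; congr (_ + _); first by apply: IH; lia.
apply: eq_big_nat => b /andP[b_gt0 lt_bn]; apply: eq_big_nat => a /andP[lt_ba le_a].
by congr (_ * _); apply: IH; lia.
Qed.

Theorem lemma2 (R : realFieldType) (c : nat -> nat -> R) (alpha : nat -> R) :
  solves_eq c alpha ->
  forall n : nat, (1 <= n)%N -> alpha n = alpha_formula c n.
Proof.
move=> alpha_sol n n_gt0.
have -> : alpha n = powps (shiftps alpha) 1 n.-1 by rewrite /= mulps1 /shiftps prednK.
rewrite (powps_solution_powcoef (N := n) alpha_sol) ?leq_pred // /powcoef /alpha_formula.
apply: eq_big => f; last by rewrite /lagrange_coef mul1n addn0 natrM addnC.
rewrite !inE; congr (_ && _).
change ((isum (fun _ b => b) f == n.-1) = ((1 + isum (fun _ b => b) f)%N == n)).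
by apply/eqP/eqP; lia.
Qed.
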